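(* Let $X$ be a compact, Hausdorff, second-countable topological space, and let $\mathcal{Y}$ be a non-empty weak-$*$ compact subset of $\mathcal{M}(X)$. For a measure $\mu_0\in\mathcal{M}(X)$ the following are equivalent: (i) for every $f\in C^0(X)$ with $\int_X f\,d\mu_0<0$ there exists $\mu\in\mathcal{Y}$ with $\int_X f\,d\mu\le 0$; (ii) for every $f\in C^0(X)$ with $\int_X f\,d\mu_0=0$ there exists $\mu\in\mathcal{Y}$ with $\int_X f\,d\mu\le0$; (iii) $\mu_0$ belongs to the weak-$*$ closure of the convex hull of the positive cone over $\mathcal{Y}$; (iv) there exists a sequence $\{\mu_k\}$ in $\mathcal{Y}$ such that \[ \lim_{k\to\infty}\frac1k\sum_{i=1}^k\frac{1}{\mu_i(X)}\int_X f\,d\mu_i=\frac{1}{\mu_0(X)}\int_X f\,d\mu_0\quad\text{for all } f\in C^0(X). \]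
   Context: $C^0(X)$ is the space of continuous real functions on $X$ with the sup norm. $\mathcal{M}(X)$ is the set of (positive) Radon measures on $X$, identified via the Riesz representation theorem with positive bounded linear functionals on $C^0(X)$; the weak-$*$ topology on $\mathcal{M}(X)$ is the coarsest topology making $\mu\mapsto\int_X f\,d\mu$ continuous for every $f\in C^0(X)$. The positive cone over $\mathcal{Y}$ is $\{\lambda\mu:\lambda>0,\mu\in\mathcal{Y}\}$, and its convex hull is the set of finite convex combinations of its elements. *)

From HB Require Import structures.
From mathcomp Require Import all_boot all_order all_algebra.
From mathcomp Require Import all_classical all_reals all_analysis.
Set Implicit Arguments. Unset Strict Implicit. Unset Printing Implicit Defensive.
Import Order.TTheory GRing.Theory Num.Theory numFieldNormedType.Exports.
Local Open Scope classical_set_scope.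
Local Open Scope ring_scope.

Definition C0 (R : realType) (X : topologicalType) :=
  {f : X -> R | continuous f}.

(* A (positive Radon) measure on X, identified via Riesz with a positive
   linear functional on C^0(X); [L f] plays the role of \int_X f dmu.
   Values of L on non-continuous functions are irrelevant. *)
Definition is_measure (R : realType) (X : topologicalType)
    (L : (X -> R) -> R) : Prop :=
  [/\ forall f g : X -> R, continuous f -> continuous g ->
        L (fun x => f x + g x) = L f + L g,
      forall (a : R) (f : X -> R), continuous f ->
        L (fun x => a * f x) = a * L f &
      forall f : X -> R, continuous f -> (forall x, 0 <= f x) -> 0 <= L f].

Definition mass (R : realType) (X : topologicalType) (L : (X -> R) -> R) : R :=
  L (fun _ => 1).

Definition evalC (R : realType) (X : topologicalType) (L : (X -> R) -> R)
  : {ptws C0 R X -> R} := fun f => L (proj1_sig f).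

Definition wstar (R : realType) (X : topologicalType) :=
  initial_topology (@evalC R X).

Definition pos_cone (R : realType) (X : topologicalType)
    (Y : set ((X -> R) -> R)) : set ((X -> R) -> R) :=
  [set L | exists lam : R, exists2 mu, Y mu &
     0 < lam /\ L = (fun f => lam * mu f)].

Definition conv_hull (R : realType) (X : topologicalType)
    (S : set ((X -> R) -> R)) : set ((X -> R) -> R) :=
  [set L | exists n : nat, exists w : 'I_n -> R, exists m : 'I_n -> (X -> R) -> R,
     [/\ forall i, 0 <= w i, \sum_(i < n) w i = 1, forall i, S (m i) &
         L = (fun f => \sum_(i < n) w i * m i f)]].

(* By compactness of Y, (iii) implies (ii): if every mu in Y satisfied mu f > 0
   then mu (f - c) > 0 for some uniform c > 0, and the closed half-space
   {M | M (f - c) >= 0} would contain the hull of the cone over Y, hence mu0,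
   although mu0 (f - c) = - c mu0(X) < 0.  The Cesaro means, rescaled by
   mu0(X), lie in that hull, so (iv) implies (iii); (ii) implies (i) by adding
   a constant to f.

   For (i) implies (iv), fix continuous theta_j with 0 <= theta_j <= 2^-j whose
   span is uniformly dense (normalized Urysohn bumps over a countable basis),
   and choose the mu_k greedily in the spirit of Blackwell's approachability:
   with d_i(j) = mu_i(theta_j) / mu_i(X) - nu0(theta_j), where nu0 is mu0
   normalized, and E_k(j) = sum_(i < k) d_i(j), condition (i) applied to
   sum_j E_k(j) theta_j gives mu_k with sum_j E_k(j) d_k(j) <= 1.  Expanding
   E_(k+1)(j)^2 then shows that sum_j E_k(j)^2 grows at most linearly in k, so
   E_k(j) / k tends to 0: the Cesaro means converge on every theta_j, hence on
   all of C^0(X) by density. *)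

From HB Require Import structures.
From mathcomp Require Import all_boot all_order all_algebra.
From mathcomp Require Import all_classical all_reals all_analysis.
From mathcomp Require Import ring lra.
Import Order.TTheory GRing.Theory Num.Theory numFieldNormedType.Exports.
Local Open Scope classical_set_scope.
Local Open Scope ring_scope.
Set Implicit Arguments. Unset Strict Implicit. Unset Printing Implicit Defensive.

(** * Positive functionals and the weak-* topology *)

Section ContinuousFunctions.
Context {R : realType} {X : topologicalType}.
Implicit Types (f g : X -> R).

Lemma continuous_add f g : continuous f -> continuous g ->
  continuous (fun x => f x + g x).
Proof. by move=> cf cg x; apply: cvgD; [exact: cf|exact: cg]. Qed.

Lemma continuous_sub f g : continuous f -> continuous g ->
  continuous (fun x => f x - g x).
Proof. by move=> cf cg x; apply: cvgB; [exact: cf|exact: cg]. Qed.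

Lemma continuous_subr_cst f (c : R) : continuous f -> continuous (fun x => f x - c).
Proof. by move=> cf; apply: continuous_sub => //; exact: cst_continuous. Qed.

Lemma continuous_scale (a : R) f : continuous f -> continuous (fun x => a * f x).
Proof. by move=> cf x; apply: cvgM; [exact: cvg_cst|exact: cf]. Qed.

Lemma continuous_sum (I : Type) (s : seq I) (F : I -> X -> R) :
  (forall i, continuous (F i)) -> continuous (fun x => \sum_(i <- s) F i x).
Proof.
move=> cF; elim: s => [|i s IH].
  by under eq_fun do rewrite big_nil; exact: cst_continuous.
by under eq_fun do rewrite big_cons; exact: continuous_add.
Qed.

End ContinuousFunctions.

Section PositiveFunctional.
Context {R : realType} {X : topologicalType}.
Variable L : (X -> R) -> R.
Hypothesis mL : is_measure L.
Implicit Types (f g : X -> R).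

Lemma measureD f g : continuous f -> continuous g ->
  L (fun x => f x + g x) = L f + L g.
Proof. by case: mL => + _ _; apply. Qed.

Lemma measureZ (a : R) f : continuous f -> L (fun x => a * f x) = a * L f.
Proof. by case: mL => _ + _; apply. Qed.

Lemma measure_ge0 f : continuous f -> (forall x, 0 <= f x) -> 0 <= L f.
Proof. by case: mL => _ _; apply. Qed.

Lemma measure_cst (c : R) : L (fun _ => c) = c * mass L.
Proof.
rewrite /mass -measureZ; last exact: cst_continuous.
by congr L; apply: funext => x; rewrite mulr1.
Qed.

Lemma mass_ge0 : 0 <= mass L.
Proof. by apply: measure_ge0 => //; exact: cst_continuous. Qed.

Lemma measureN f : continuous f -> L (fun x => - f x) = - L f.
Proof.
move=> cf; rewrite -mulN1r -measureZ //.
by congr L; apply: funext => x; rewrite mulN1r.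
Qed.

Lemma measureB f g : continuous f -> continuous g ->
  L (fun x => f x - g x) = L f - L g.
Proof.
move=> cf cg; rewrite measureD ?measureN //.
by move=> x; apply: cvgN; exact: cg.
Qed.

Lemma measure_subr_cst f (c : R) : continuous f ->
  L (fun x => f x - c) = L f - c * mass L.
Proof. by move=> cf; rewrite measureB ?measure_cst //; exact: cst_continuous. Qed.

Lemma measure_le f g : continuous f -> continuous g ->
  (forall x, f x <= g x) -> L f <= L g.
Proof.
move=> cf cg fg; rewrite -subr_ge0 -measureB //.
by apply: measure_ge0 => [|x]; [exact: continuous_sub|rewrite subr_ge0].
Qed.

Lemma measure_dist_le f g (e : R) : continuous f -> continuous g ->
  (forall x, `|f x - g x| <= e) -> `|L f - L g| <= e * mass L.
Proof.
move=> cf cg fge; rewrite -measureB // -measure_cst ler_norml.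
have cfg : continuous (fun x => f x - g x) by exact: continuous_sub.
apply/andP; split.
  rewrite -measureN; last exact: cst_continuous.
  apply: measure_le => //; first exact: cst_continuous.
  by move=> x; have := fge x; rewrite ler_norml => /andP[].
apply: measure_le => //; first exact: cst_continuous.
by move=> x; have := fge x; rewrite ler_norml => /andP[].
Qed.

Lemma measure_sum (I : Type) (s : seq I) (F : I -> X -> R) :
  (forall i, continuous (F i)) ->
  L (fun x => \sum_(i <- s) F i x) = \sum_(i <- s) L (F i).
Proof.
move=> cF; elim: s => [|i s IH].
  by under eq_fun do rewrite big_nil; rewrite big_nil measure_cst mul0r.
under eq_fun do rewrite big_cons.
by rewrite measureD ?big_cons ?IH //; exact: continuous_sum.
Qed.

Lemma measure_scale (c : R) : 0 <= c -> is_measure (fun g => c * L g).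
Proof.
move=> c0; split => [f g cf cg|a f cf|f cf f0].
- by rewrite measureD // mulrDr.
- by rewrite measureZ // mulrCA.
- by rewrite mulr_ge0 // measure_ge0.
Qed.

End PositiveFunctional.

Lemma initial_cvgP (S : choiceType) (T : topologicalType) (f : S -> T)
    (F : set_system S) (x : S) : Filter F ->
  (F --> (x : initial_topology f)) <-> (f @ F --> f x).
Proof.
move=> FF; split; first by move=> Fx A /initial_continuous fA; exact: Fx.
move=> fF A /= [_ [[B oB <-] Bfx sBA]].
have : nbhs (f x) B by exact: open_nbhs_nbhs.
by move/fF; rewrite nbhs_simpl => /= FB; apply: filterS FB.
Qed.

Lemma ptws_cvgP (I : Type) (T : topologicalType) (F : set_system {ptws I -> T})
    (t : {ptws I -> T}) : Filter F ->
  (F --> t) <-> (forall i, (fun h => h i) @ F --> t i).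
Proof.
move=> FF; rewrite (@cvg_sup (I -> T) I
  (fun i => Topological.class (initial_topology (fun f : I -> T => f i))) F t FF).
split=> Ft i; first by have /initial_cvgP := Ft i; apply.
by apply/initial_cvgP; exact: Ft.
Qed.

Section WeakStar.
Context {R : realType} {X : topologicalType}.

Lemma wstar_cvgP (F : set_system (wstar R X)) (L : wstar R X) : Filter F ->
  (F --> L) <-> (forall g, continuous g -> (fun M : (X -> R) -> R => M g) @ F --> L g).
Proof.
move=> FF; rewrite initial_cvgP ptws_cvgP; split; last by move=> FL [g cg]; exact: FL.
by move=> FL g cg; exact: (FL (exist _ g cg)).
Qed.

Lemma continuous_wstar_eval (g : X -> R) : continuous g ->
  continuous (fun M : wstar R X => M g).
Proof. by move=> cg L; have /wstar_cvgP := @cvg_id _ (nbhs L); apply. Qed.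

End WeakStar.

(** * The four conditions and the easy implications *)

Section Conditions.
Context {R : realType} {X : topologicalType}.

Definition neg_witnessed (Y : set (wstar R X)) (mu0 : (X -> R) -> R) :=
  forall f : X -> R, continuous f -> mu0 f < 0 -> exists2 mu, Y mu & mu f <= 0.

Definition null_witnessed (Y : set (wstar R X)) (mu0 : (X -> R) -> R) :=
  forall f : X -> R, continuous f -> mu0 f = 0 -> exists2 mu, Y mu & mu f <= 0.

Definition cesaro_mean (u : nat -> (X -> R) -> R) (k : nat) : (X -> R) -> R :=
  fun f => k%:R^-1 * \sum_(i < k) (u i f / mass (u i)).

Definition cesaro_approachable (Y : set (wstar R X)) (mu0 : (X -> R) -> R) :=
  exists2 u : nat -> (X -> R) -> R, (forall k, Y (u k)) &
    forall f, continuous f -> (fun k => cesaro_mean u k f) @ \oo --> mu0 f / mass mu0.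

Lemma cesaro_meanE (u : nat -> (X -> R) -> R) (k : nat) (g : X -> R) (c : R) :
  (0 < k)%N -> cesaro_mean u k g = c + k%:R^-1 * \sum_(i < k) (u i g / mass (u i) - c).
Proof.
move=> k0; rewrite /cesaro_mean sumrB sumr_const card_ord mulrBr -[c *+ k]mulr_natr.
rewrite mulrCA mulVf ?pnatr_eq0 -?lt0n //.
by rewrite mulr1 addrC subrK.
Qed.

Lemma cesaro_mean_measure (u : nat -> (X -> R) -> R) (k : nat) :
  (forall i, is_measure (u i)) -> is_measure (cesaro_mean u k).
Proof.
move=> u_meas; split => [f g cf cg|a f cf|f cf f0]; rewrite /cesaro_mean.
- rewrite -mulrDr -big_split; congr (_ * _); apply: eq_bigr => i _.
  by rewrite (measureD (u_meas i)) // mulrDl.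
- rewrite mulrCA [a * _]mulr_sumr; congr (_ * _); apply: eq_bigr => i _.
  by rewrite (measureZ (u_meas i)) // mulrA.
- apply: mulr_ge0; first by rewrite invr_ge0.
  apply: sumr_ge0 => i _; apply: divr_ge0; first exact: measure_ge0.
  exact: mass_ge0.
Qed.

Lemma cesaro_mean_mass_le1 (u : nat -> (X -> R) -> R) (k : nat) :
  (forall i, is_measure (u i)) -> mass (cesaro_mean u k) <= 1.
Proof.
move=> u_meas; rewrite /mass /cesaro_mean.
have [->|k0] := posnP k; first by rewrite big_ord0 mulr0.
rewrite ler_pdivrMl ?ltr0n // mulr1; apply: le_trans (_ : \sum_(i < k) 1 <= _).
  apply: ler_sum => i _; rewrite -/(mass (u i)).
  by have [->|m0] := eqVneq (mass (u i)) 0; rewrite ?mul0r ?mulfV.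
by rewrite sumr_const card_ord.
Qed.

Lemma compact_uniform_gap (Y : set (wstar R X)) (g : X -> R) :
  compact Y -> (forall mu, Y mu -> is_measure mu) -> continuous g ->
  (forall mu, Y mu -> 0 < mu g) ->
  exists2 c : R, 0 < c & forall mu, Y mu -> 0 < mu (fun x => g x - c).
Proof.
move=> cY Ymeas cg Yg.
pose U n := [set M : wstar R X | 0 < M (fun x => g x - n.+1%:R^-1)].
have [D _ YD] : finite_subset_cover [set: nat] U Y.
  move: cY; rewrite compact_cover; apply.
    move=> n _; apply: (@open_comp _ _ (fun M : wstar R X => M _) [set x | 0 < x]).
      by move=> M _; apply/continuous_wstar_eval/continuous_subr_cst.
    exact: open_gt.
  move=> mu Ymu; exists (Num.truncn (mass mu / mu g)) => //.
  rewrite /U /= (measure_subr_cst (Ymeas _ Ymu)) // subr_gt0 mulrC.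
  rewrite -ltr_pdivlMr ?invr_gt0 ?ltr0n // invrK mulrC -ltr_pdivrMr ?Yg //.
  exact: truncnS_gt.
pose N := \max_(n <- finmap.enum_fset D) n.
exists N.+1%:R^-1 => [|mu Ymu]; first by rewrite invr_gt0 ltr0n.
have [n Dn Umu] := YD mu Ymu; apply: lt_le_trans Umu _.
rewrite /= !(measure_subr_cst (Ymeas _ Ymu)) // lerD2l lerN2.
apply: ler_wpM2r; first exact/mass_ge0/Ymeas.
rewrite lef_pV2 ?posrE // ler_nat ltnS.
exact: (@leq_bigmax_seq nat _ xpredT id n Dn).
Qed.

Variable Y : set (wstar R X).
Hypothesis Ymeas : forall mu, Y mu -> is_measure mu.
Hypothesis Ypos : forall mu, Y mu -> 0 < mass mu.
Variable mu0 : (X -> R) -> R.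
Hypothesis mu0meas : is_measure mu0.
Hypothesis mu0pos : 0 < mass mu0.

Lemma neg_witnessed_of_null : null_witnessed Y mu0 -> neg_witnessed Y mu0.
Proof.
move=> Ynull f cf f0; set c := mu0 f / mass mu0.
have c0 : c < 0 by rewrite pmulr_llt0 ?invr_gt0.
have [|mu Ymu] := Ynull _ (continuous_subr_cst (c := c) cf).
  by rewrite (measure_subr_cst mu0meas) // mulfVK ?subrr ?gt_eqF.
rewrite (measure_subr_cst (Ymeas Ymu)) // subr_le0 => muf.
by exists mu => //; apply: (le_trans muf); rewrite ltW // pmulr_llt0 ?Ypos.
Qed.

Lemma null_witnessed_of_closure : compact Y ->
  closure (conv_hull (pos_cone Y) : set (wstar R X)) mu0 -> null_witnessed Y mu0.
Proof.
move=> cY hull0 f cf f0.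
have [//|nY] := pselect (exists2 mu, Y mu & mu f <= 0).
have [c c0 Yc] : exists2 c : R, 0 < c & forall mu, Y mu -> 0 < mu (fun x => f x - c).
  apply: compact_uniform_gap => // mu Ymu.
  by rewrite ltNge; apply/negP => muf; apply: nY; exists mu.
pose C := [set M : wstar R X | 0 <= M (fun x => f x - c)].
have clC : closed C.
  apply: (@preimage_closed _ _ (fun M : wstar R X => M _) [set x | 0 <= x]).
    by move=> M _; apply/continuous_wstar_eval/continuous_subr_cst.
  exact: closed_ge.
have hullC : conv_hull (pos_cone Y) `<=` C.
  move=> _ [n [w [m [w0 _ Ym ->]]]]; apply: sumr_ge0 => i _.
  have [lam [mu Ymu [lam0 ->]]] := Ym i.
  by rewrite /= mulr_ge0 // mulr_ge0 // ltW // Yc.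
have : C mu0.
  by rewrite (closure_id C).1 //; exact: (@closureS (wstar R X) _ _ hullC) _ hull0.
by rewrite /C /= (measure_subr_cst mu0meas) // f0 sub0r oppr_ge0 pmulr_lle0 // leNgt c0.
Qed.

Lemma scaled_cesaro_mean_in_hull (u : nat -> (X -> R) -> R) (c : R) (k : nat) :
  (forall i, Y (u i)) -> 0 < c -> (0 < k)%N ->
  conv_hull (pos_cone Y) (fun g => c * cesaro_mean u k g).
Proof.
move=> Yu c0 k0.
exists k, (fun _ => k%:R^-1), (fun i g => c / mass (u i) * u i g); split.
- by move=> i; rewrite invr_ge0.
- by rewrite sumr_const card_ord -[_ *+ k]mulr_natl mulfV // pnatr_eq0 -lt0n.
- move=> i; exists (c / mass (u i)), (u i) => //; split => //.
  by apply: divr_gt0 => //; exact: Ypos.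
- apply: funext => g; rewrite /cesaro_mean !mulr_sumr.
  by apply: eq_bigr => i _; ring.
Qed.

Lemma closure_of_cesaro_approachable : cesaro_approachable Y mu0 ->
  closure (conv_hull (pos_cone Y) : set (wstar R X)) mu0.
Proof.
case=> u Yu umu0; pose s k : wstar R X := fun g => mass mu0 * cesaro_mean u k g.
have smu0 : s @ \oo --> (mu0 : wstar R X).
  apply/wstar_cvgP => g cg.
  rewrite -[mu0 g](mulfVK (lt0r_neq0 mu0pos)) mulrC.
  by apply: cvgM; [exact: cvg_cst|exact: umu0].
move=> B /smu0 [N _ sB]; exists (s N.+1); split; last by apply: sB => /=.
exact: scaled_cesaro_mean_in_hull.
Qed.

Lemma neg_witnessed_below : neg_witnessed Y mu0 -> forall f, continuous f ->
  exists2 mu, Y mu & mu f / mass mu <= (mass mu0)^-1 * mu0 f + 1.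
Proof.
move=> Yneg f cf; set c := (mass mu0)^-1 * mu0 f + 1.
have [|mu Ymu] := Yneg _ (continuous_subr_cst (c := c) cf).
  rewrite (measure_subr_cst mu0meas) // /c mulrDl mulrAC mulVf ?gt_eqF // !mul1r.
  by rewrite opprD addrA subrr sub0r oppr_lt0.
rewrite (measure_subr_cst (Ymeas Ymu)) // subr_le0 => muf.
by exists mu => //; rewrite ler_pdivrMr ?Ypos.
Qed.

End Conditions.

(** * Approachability *)

Lemma sum_half_powers_le {R : realType} (m n : nat) :
  \sum_(m <= j < m + n) (2^-1 : R) ^+ j <= 2 * 2^-1 ^+ m.
Proof.
rewrite geometric_partial_tail mulrC.
apply: le_trans (geometric_le_lim _ _ _ _) _ => //.
  by rewrite ger0_norm // invf_lt1 // ltr1n.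
by rewrite [leRHS](_ : _ = 2^-1 ^+ m / (1 - 2^-1)) //; field.
Qed.

Section Approachability.
Context {R : realType}.
Local Notation q := (2^-1 : R).
Variable d : nat -> nat -> R.
Hypothesis d_le : forall k j, `|d k j| <= q ^+ j.
Let E k j := \sum_(i < k) d i j.
Hypothesis d_step : forall k, \sum_(j < k) E k j * d k j <= 1.

Let natr_mul_half_pow_le1 k : k%:R * q ^+ k <= 1.
Proof.
rewrite exprVn -ler_pdivlMr ?invr_gt0 ?exprn_gt0 // invrK mul1r -natrX ler_nat.
exact/ltnW/ltn_expl.
Qed.

Let E_le k j : `|E k j| <= k%:R * q ^+ j.
Proof.
apply: le_trans (ler_norm_sum _ _ _) _.
apply: le_trans (_ : \sum_(i < k) q ^+ j <= _); first by apply: ler_sum => i _.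
by rewrite sumr_const card_ord mulr_natl.
Qed.

(* The first k terms are bounded by [d_step]; for j >= k we have
   |E k j| <= k 2^-k <= 1, so the remaining terms add up to at most 2. *)
Let cross_le k J : (k <= J)%N -> \sum_(j < J) E k j * d k j <= 3.
Proof.
move=> kJ; rewrite -(big_mkord xpredT (fun j => E k j * d k j)).
rewrite (big_cat_nat (leq0n k) kJ) /= big_mkord.
suff tail : \sum_(k <= j < J) E k j * d k j <= 2.
  by have := d_step k; lra.
apply: le_trans (ler_norm _) _; apply: le_trans (ler_norm_sum _ _ _) _.
rewrite -(subnKC kJ).
apply: le_trans (_ : \sum_(k <= j < k + (J - k)) q ^+ j <= _); last first.
  apply: le_trans (sum_half_powers_le _ _) _.
  by rewrite -[leRHS]mulr1 ler_wpM2l // exprn_ile1 // invf_le1 // ler1n.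
rewrite big_nat [leRHS]big_nat; apply: ler_sum => j /andP[kj _].
rewrite normrM -[q ^+ j]mul1r; apply: ler_pM => //.
apply: le_trans (E_le k j) _; apply: le_trans (natr_mul_half_pow_le1 k).
by apply: ler_wpM2l => //; apply: ler_wiXn2l => //; rewrite invf_le1 // ler1n.
Qed.

Let sq_sum_le k J : \sum_(j < J) d k j ^+ 2 <= 2.
Proof.
apply: le_trans (_ : \sum_(0 <= j < 0 + J) q ^+ j <= _); last first.
  by apply: le_trans (sum_half_powers_le _ _) _; rewrite expr0 mulr1.
rewrite add0n big_mkord; apply: ler_sum => j _.
apply: le_trans (_ : q ^+ j * q ^+ j <= _).
  by rewrite -real_normK ?num_real // expr2 ler_pM.
by rewrite ler_piMl ?exprn_ge0 // exprn_ile1 // invf_le1 // ler1n.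
Qed.

(* Expanding (E k j + d k j)^2, the cross terms are bounded by [cross_le], so
   while k <= J the potential increases by at most 2 * 3 + 2 at each step. *)
Let E_sq_sum_le k J : (k <= J)%N -> \sum_(j < J) E k j ^+ 2 <= 8 * k%:R.
Proof.
elim: k => [|k IH] kJ.
  by rewrite big1 ?mulr0 // => j _; rewrite /E big_ord0 expr0n.
have ES j : E k.+1 j = E k j + d k j by rewrite /E big_ord_recr.
under eq_bigr do rewrite ES sqrrD.
rewrite !big_split /=.
have := IH (ltnW kJ); have := cross_le (ltnW kJ); have := sq_sum_le k J.
rewrite -natr1; lra.
Qed.

Let E_sq_le k j : E k j ^+ 2 <= 8 * k%:R.
Proof.
have jJ : (j < j.+1 + k)%N by rewrite ltnS leq_addr.
apply: le_trans (E_sq_sum_le (leq_addl j.+1 k)).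
rewrite (bigD1 (Ordinal jJ)) //= lerDl; apply: sumr_ge0 => i _; exact: sqr_ge0.
Qed.

Lemma approachability_mean_cvg0 j : (fun k => k%:R^-1 * E k j) @ \oo --> 0.
Proof.
apply/cvgrPdist_lt => e e0; exists (Num.truncn (8 / e ^+ 2)).+1 => // k /= Nk.
have k0 : 0 < k%:R :> R by rewrite ltr0n; apply: leq_trans Nk.
have ke : 8 < e ^+ 2 * k%:R.
  rewrite -ltr_pdivrMl ?exprn_gt0 // mulrC; apply: lt_le_trans (truncnS_gt _) _.
  by rewrite ler_nat.
rewrite sub0r normrN normrM ger0_norm ?invr_ge0 ?ltW // mulrC ltr_pdivrMr //.
rewrite -ltr_sqr ?nnegrE ?normr_ge0 ?mulr_ge0 ?ltW // real_normK ?num_real //.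
apply: le_lt_trans (E_sq_le k j) _; rewrite exprMn.
nra.
Qed.

End Approachability.

Section GreedySequence.
Context {R : realType} {X : topologicalType}.
Local Notation q := (2^-1 : R).
Variable Y : set (wstar R X).
Hypothesis Ymeas : forall mu, Y mu -> is_measure mu.
Hypothesis Ypos : forall mu, Y mu -> 0 < mass mu.
Hypothesis Yne : Y !=set0.
Variable nu0 : (X -> R) -> R.
Hypothesis nu0meas : is_measure nu0.
Hypothesis nu0_mass : mass nu0 = 1.
Hypothesis Y_below : forall f, continuous f ->
  exists2 mu, Y mu & mu f / mass mu <= nu0 f + 1.
Variable theta : nat -> X -> R.
Hypothesis theta_cont : forall j, continuous (theta j).
Hypothesis theta_le : forall j x, 0 <= theta j x <= q ^+ j.

(* [pick] is total, but it is only ever applied to continuous potentials. *)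
Let pick_spec f : exists mu, Y mu /\ (continuous f -> mu f / mass mu <= nu0 f + 1).
Proof.
have [cf|ncf] := pselect (continuous f); first by have [mu] := Y_below cf; exists mu.
by have [mu Ymu] := Yne; exists mu; split => // /ncf.
Qed.

Let pick f := projT1 (cid (pick_spec f)).

Let pickY f : Y (pick f).
Proof. by rewrite /pick; case: cid => ? []. Qed.

Let pickP f : continuous f -> pick f f / mass (pick f) <= nu0 f + 1.
Proof. by rewrite /pick; case: cid => ? []. Qed.

Let defect (mu : (X -> R) -> R) j := mu (theta j) / mass mu - nu0 (theta j).

Let potential (s : seq ((X -> R) -> R)) : X -> R :=
  fun x => \sum_(j < size s) (\sum_(mu <- s) defect mu j) * theta j x.

Let history := fix history n :=
  if n is n.+1 then rcons (history n) (pick (potential (history n))) else [::].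

Let u k := pick (potential (history k)).

Let uY k : Y (u k). Proof. exact: pickY. Qed.

Let historyE k : history k = map u (iota 0 k).
Proof.
elim: k => [//|k IH]; rewrite [history k.+1]/= -/(u k) IH.
by rewrite -addn1 iotaD map_cat -cats1.
Qed.

Let normalized_le mu j : is_measure mu -> 0 < mass mu ->
  0 <= mu (theta j) / mass mu <= q ^+ j.
Proof.
move=> mmu m0; apply/andP; split.
  apply: divr_ge0; last exact: ltW.
  by apply: (measure_ge0 mmu) => // x; have /andP[] := theta_le j x.
rewrite ler_pdivrMr // -(measure_cst mmu).
apply: (measure_le mmu) => //; first exact: cst_continuous.
by move=> x; have /andP[] := theta_le j x.
Qed.

Let defect_le k j : `|defect (u k) j| <= q ^+ j.
Proof.
have /andP[a0 a1] := normalized_le j (Ymeas (uY k)) (Ypos (uY k)).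
have := normalized_le j nu0meas; rewrite nu0_mass divr1 => /(_ ltr01) /andP[b0 b1].
by rewrite /defect ler_norml; apply/andP; split; lra.
Qed.

Let defect_step k :
  \sum_(j < k) (\sum_(i < k) defect (u i) j) * defect (u k) j <= 1.
Proof.
have Esum j : \sum_(mu <- history k) defect mu j = \sum_(i < k) defect (u i) j.
  rewrite historyE big_map -(big_mkord xpredT (fun i => defect (u i) j)).
  by rewrite /index_iota subn0.
have cF : continuous (potential (history k)).
  by apply: continuous_sum => j; exact: continuous_scale.
have mu_k := Ymeas (uY k).
have size_history : size (history k) = k by rewrite historyE size_map size_iota.
have cFj (j : 'I_k) :
    continuous (fun x => (\sum_(mu <- history k) defect mu j) * theta j x).
  exact: continuous_scale.
have := pickP cF; rewrite -/(u k) /potential size_history.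
rewrite (measure_sum mu_k _ cFj) (measure_sum nu0meas _ cFj).
under eq_bigr => j _ do rewrite (measureZ mu_k _ (@theta_cont j)) Esum.
under [in X in _ <= X + 1]eq_bigr => j _ do
  rewrite (measureZ nu0meas _ (@theta_cont j)) Esum.
rewrite mulr_suml /defect => h.
under eq_bigr do rewrite mulrBr mulrA.
by rewrite sumrB; lra.
Qed.

Lemma greedy_cesaro_cvg : exists2 u : nat -> (X -> R) -> R, (forall k, Y (u k)) &
  forall j, (fun k => cesaro_mean u k (theta j)) @ \oo --> nu0 (theta j).
Proof.
exists u => // j; rewrite -[nu0 _]addr0.
apply: cvg_trans (cvgD (cvg_cst _) (approachability_mean_cvg0 defect_le defect_step j)).
apply: near_eq_cvg; near=> k; rewrite (cesaro_meanE _ _ (nu0 (theta j))) //.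
by near: k; exists 1%N.
Unshelve. all: by end_near. Qed.

End GreedySequence.

(** * A countable uniformly dense family *)

(* [compact_cover] is only stated for pointed spaces. *)
Lemma compact_cover_compact (X : topologicalType) (A : set X) :
  compact A -> cover_compact A.
Proof.
have [[x0 _]|X0] := pselect (exists x : X, True).
  pose Xp : ptopologicalType := HB.pack X (isPointed.Build X x0).
  by move=> cA; have : @compact Xp A := cA; rewrite compact_cover; apply.
move=> _ I D F _ _; exists finmap.fset0 => [i|x]; first by rewrite finmap.in_fset0.
by case: X0; exists x.
Qed.

Lemma second_countable_basis_seq (X : topologicalType) : @second_countable X ->
  exists b : nat -> set X, (forall n, open (b n)) /\
    (forall x U, nbhs x U -> exists n, b n x /\ b n `<=` U).
Proof.
case=> B cB [Bop Bnb]; have [B0|/surjfunPex[b bE]] := pfcard_geP cB.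
  exists (fun=> set0); split => [n|x U /Bnb [V [BV _] _]]; first exact: open0.
  by rewrite B0 in BV.
exists b; split => [n|x U /Bnb [V [BV Vx] VU]]; first by apply: Bop; rewrite bE.
by move: BV; rewrite bE => -[n _ bnV]; exists n; rewrite bnV.
Qed.

Definition uniformly_dense_span {R : realType} {X : topologicalType}
    (theta : nat -> X -> R) :=
  forall f, continuous f -> forall e, 0 < e -> exists l : seq (R * nat),
    forall x, `|f x - \sum_(p <- l) p.1 * theta p.2 x| <= e.

Lemma partition_of_unity_approx {R : realType} (I : eqType) (s : seq I)
    (h c : I -> R) (y e : R) :
  (forall i, 0 <= h i) -> 0 < \sum_(i <- s) h i ->
  (forall i, i \in s -> h i != 0 -> `|c i - y| <= e) ->
  `|y - \sum_(i <- s) c i * (h i / \sum_(j <- s) h j)| <= e.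
Proof.
set S := \sum_(j <- s) h j => h0 S0 ch.
have {1}-> : y = \sum_(i <- s) y * (h i / S).
  by rewrite -mulr_sumr -mulr_suml mulfV ?mulr1 ?gt_eqF.
rewrite -sumrB; under eq_bigr do rewrite -mulrBl.
apply: le_trans (ler_norm_sum _ _ _) _.
apply: le_trans (_ : \sum_(i <- s) e * (h i / S) <= _); last first.
  by rewrite -mulr_sumr -mulr_suml mulfV ?mulr1 ?gt_eqF.
rewrite big_seq [leRHS]big_seq; apply: ler_sum => i si.
have hS0 : 0 <= h i / S by apply: divr_ge0 => //; exact: ltW.
rewrite normrM (ger0_norm hS0).
have [->|hi0] := eqVneq (h i) 0; first by rewrite !mul0r mulr0.
apply: ler_wpM2r => //.
by rewrite distrC; apply: ch.
Qed.

Section CountableDenseFamily.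
Context {R : realType} {X : topologicalType}.
Local Notation q := (2^-1 : R).
Hypothesis hX : hausdorff_space X.
Hypothesis cX : compact [set: X].
Variable b : nat -> set X.
Hypothesis b_open : forall n, open (b n).
Hypothesis b_basis : forall x U, nbhs x U -> exists n, b n x /\ b n `<=` U.

Let b_regular x U : nbhs x U -> exists n, b n x /\ closure (b n) `<=` U.
Proof.
move=> xU; have [V xV clVU] := @compact_regular X x setT hX cX filterT U xU.
have [n [bnx bnV]] := b_basis xV.
by exists n; split => //; apply: subset_trans clVU; exact: closureS.
Qed.

Let nested (p : nat * nat) := closure (b p.1) `<=` b p.2.

Let bump (p : nat * nat) : X -> R := Urysohn (~` b p.2) (closure (b p.1)).

Let bump_separator p : nested p -> uniform_separator (~` b p.2) (closure (b p.1)).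
Proof.
move=> np; apply: (@normal_separatorP R X).1; first exact: compact_normal.
- exact/open_closedC/b_open.
- exact: closed_closure.
- by rewrite -subset0 => y [nby /np].
Qed.

Let bump_continuous p : continuous (bump p).
Proof. exact: Urysohn_continuous. Qed.

Let bump01 p x : 0 <= bump p x <= 1.
Proof.
have : bump p x \in `[0, 1] by apply: (@Urysohn_range X R); exists x.
by rewrite in_itv.
Qed.

Let bump_out p x : nested p -> ~ b p.2 x -> bump p x = 0.
Proof. by move=> np nbx; apply: (Urysohn_sub0 (bump_separator np)); exists x. Qed.

Let bump_in p x : nested p -> b p.1 x -> bump p x = 1.
Proof.
move=> np bx; apply: (Urysohn_sub1 (bump_separator np)).
by exists x => //; exact: subset_closure.
Qed.

Let bump_sum s x := \sum_(p <- s) bump p x.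

Let unit_part s p x := bump p x / Num.max 1 (bump_sum s x).

Let unit_part_continuous s p : continuous (unit_part s p).
Proof.
move=> x; apply: cvgM; first exact: bump_continuous.
apply: cvgV; first by rewrite gt_eqF // lt_max ltr01.
apply: (@continuous_max R X (fun _ => 1) (bump_sum s) x); first exact: cvg_cst.
exact: continuous_sum.
Qed.

Let unit_part01 s p x : 0 <= unit_part s p x <= 1.
Proof.
have /andP[b0 b1] := bump01 p x.
have M1 : 1 <= Num.max 1 (bump_sum s x) by rewrite le_max lexx.
have M0 := lt_le_trans ltr01 M1.
by rewrite /unit_part divr_ge0 ?(ltW M0) //= ler_pdivrMr // mul1r (le_trans b1).
Qed.

(* theta n is the n-th member, via [unpickle], of the partitions of unity
   subordinate to finite families of nested pairs of basic sets, damped by 2^-n. *)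
Let theta n x := q ^+ n *
  (if @unpickle (seq (nat * nat) * (nat * nat))%type n is Some sp
   then unit_part sp.1 sp.2 x else 0).

Let theta_continuous n : continuous (theta n).
Proof.
apply: continuous_scale; case: unpickle => [sp|]; first exact: unit_part_continuous.
exact: cst_continuous.
Qed.

Let theta_le n x : 0 <= theta n x <= q ^+ n.
Proof.
have qn0 : 0 <= q ^+ n by rewrite exprn_ge0 // invr_ge0.
rewrite /theta; case: unpickle => [sp|]; last by rewrite mulr0 lexx qn0.
have /andP[u0 u1] := unit_part01 sp.1 sp.2 x.
by rewrite mulr_ge0 //= -[leRHS]mulr1 ler_wpM2l.
Qed.

Let oscillation_cover f e : continuous f -> 0 < e ->
  exists s : seq (nat * nat), exists c : nat * nat -> R,
  [/\ forall p, p \in s -> nested p,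
      forall p y, p \in s -> b p.2 y -> `|c p - f y| <= e &
      forall x, exists2 p, p \in s & b p.1 x].
Proof.
move=> cf e0.
pose D := [set p : nat * nat | nested p /\
  exists c : R, forall y, b p.2 y -> `|c - f y| <= e].
have [D' D'D cov] : finite_subset_cover D (fun p => b p.1) [set: X].
  apply: (compact_cover_compact cX) => [p _|x _]; first exact: b_open.
  have xU : nbhs x [set y | `|f x - f y| < e].
    exact: (cf x _ (nbhsx_ballx (f x) e e0)).
  have [m [bmx bmU]] := b_basis xU.
  have [n [bnx clbn]] : exists n, b n x /\ closure (b n) `<=` b m.
    by apply: b_regular; apply: open_nbhs_nbhs; split.
  by exists (n, m) => //; split => //; exists (f x) => y /bmU /ltW.
have c_spec p : exists c : R, D p -> forall y, b p.2 y -> `|c - f y| <= e.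
  by have [[_ [c Dc]]|nD] := pselect (D p); [exists c | exists 0].
exists (finmap.enum_fset D'), (fun p => projT1 (cid (c_spec p))); split.
- by move=> p /D'D; rewrite inE => -[].
- by move=> p y /D'D; rewrite inE => Dp; case: cid => c /= /(_ Dp); apply.
- by move=> x; have [p] := cov x I; exists p.
Qed.

Let theta_dense : uniformly_dense_span theta.
Proof.
move=> f cf e e0; have [s [c [s_nested s_osc s_cover]]] := oscillation_cover cf e0.
exists [seq (c p * 2 ^+ pickle (s, p), pickle (s, p)) | p <- s] => x.
(* The factor 2 ^+ pickle (s, p) cancels the damping of theta. *)
rewrite big_map.
under eq_bigr => p _ do
  rewrite /theta pickleK /= exprVn mulrA mulrK ?unitfE ?expf_neq0 //.
have [p sp bpx] := s_cover x.
have S1 : 1 <= bump_sum s x.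
  rewrite /bump_sum (big_rem p) //= (bump_in (s_nested _ sp) bpx) lerDl.
  by apply: sumr_ge0 => i _; have /andP[] := bump01 i x.
rewrite /unit_part max_r //; apply: partition_of_unity_approx => [i||i si].
- by have /andP[] := bump01 i x.
- exact: lt_le_trans ltr01 S1.
- have [bix _|nbix] := pselect (b i.2 x); first exact: s_osc.
  by rewrite bump_out ?eqxx //; exact: s_nested.
Qed.

Lemma basis_dense_family : exists theta : nat -> X -> R,
  [/\ forall n, continuous (theta n), forall n x, 0 <= theta n x <= q ^+ n &
      uniformly_dense_span theta].
Proof. by exists theta; split. Qed.

End CountableDenseFamily.

Lemma compact_second_countable_dense_family {R : realType} {X : topologicalType} :
  hausdorff_space X -> compact [set: X] -> @second_countable X ->
  exists theta : nat -> X -> R,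
  [/\ forall n, continuous (theta n), forall n x, 0 <= theta n x <= 2^-1 ^+ n &
      uniformly_dense_span theta].
Proof.
move=> hX cX /second_countable_basis_seq [b [b_open b_basis]].
exact: (basis_dense_family (R := R) hX cX b_open b_basis).
Qed.

(** * From (i) to (iv) *)

Lemma uniformly_dense_span_cvg {R : realType} {X : topologicalType}
    (A : nat -> (X -> R) -> R) (nu : (X -> R) -> R) (theta : nat -> X -> R) :
  (forall k, is_measure (A k)) -> (forall k, mass (A k) <= 1) ->
  is_measure nu -> mass nu <= 1 ->
  (forall j, continuous (theta j)) -> uniformly_dense_span theta ->
  (forall j, (fun k => A k (theta j)) @ \oo --> nu (theta j)) ->
  forall f, continuous f -> (fun k => A k f) @ \oo --> nu f.
Proof.
move=> A_meas A_mass nu_meas nu_mass theta_cont theta_dense A_theta f cf.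
apply/cvgrPdist_le => e e0; have e3 : 0 < e / 3 by rewrite divr_gt0.
have [l fl] := theta_dense f cf _ e3.
pose g x := \sum_(p <- l) p.1 * theta p.2 x.
have cg : continuous g by apply: continuous_sum => p; exact: continuous_scale.
have gE L : is_measure L -> L g = \sum_(p <- l) p.1 * L (theta p.2).
  move=> mL; rewrite (measure_sum mL) => [|p]; last exact: continuous_scale.
  by apply: eq_bigr => p _; rewrite (measureZ mL).
have A_g : (fun k => A k g) @ \oo --> nu g.
  under eq_fun do rewrite gE //; rewrite gE //.
  apply: cvg_big => [|p _]; first exact: add_continuous.
  by apply: cvgM; [exact: cvg_cst|exact: A_theta].
have [N _ near_g] := (cvgrPdist_le _ _).1 A_g _ e3.
exists N => // k /= Nk.
have close_f L : is_measure L -> mass L <= 1 -> `|L f - L g| <= e / 3.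
  move=> mL mL1; apply: le_trans (measure_dist_le mL cf cg fl) _.
  by rewrite ler_piMr // ltW.
have := close_f _ nu_meas nu_mass; have := close_f _ (A_meas k) (A_mass k).
have := near_g _ Nk; rewrite !ler_norml => /andP[? ?] /andP[? ?] /andP[? ?].
by apply/andP; split; lra.
Qed.

Section NegToCesaro.
Context {R : realType} {X : topologicalType}.
Variable Y : set (wstar R X).
Hypothesis Ymeas : forall mu, Y mu -> is_measure mu.
Hypothesis Ypos : forall mu, Y mu -> 0 < mass mu.
Variable mu0 : (X -> R) -> R.
Hypothesis mu0meas : is_measure mu0.
Hypothesis mu0pos : 0 < mass mu0.

Lemma cesaro_approachable_of_neg_witnessed :
  hausdorff_space X -> compact [set: X] -> @second_countable X -> Y !=set0 ->
  neg_witnessed Y mu0 -> cesaro_approachable Y mu0.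
Proof.
move=> hX cX sX Yne Yneg.
have Y_below := neg_witnessed_below Ymeas Ypos mu0meas mu0pos Yneg.
have [theta [theta_cont theta_le theta_dense]] :=
  compact_second_countable_dense_family (R := R) hX cX sX.
pose nu0 g := (mass mu0)^-1 * mu0 g.
have nu0_meas : is_measure nu0 by apply: measure_scale; rewrite // invr_ge0 ltW.
have nu0_mass : mass nu0 = 1 by rewrite /nu0 /mass mulVf ?gt_eqF.
have [u Yu u_theta] :=
  greedy_cesaro_cvg Ymeas Ypos Yne nu0_meas nu0_mass Y_below theta_cont theta_le.
exists u => // f cf; rewrite mulrC.
apply: (uniformly_dense_span_cvg _ _ nu0_meas _ theta_cont theta_dense u_theta) => //.
- by move=> k; apply: cesaro_mean_measure => i; exact: Ymeas.
- by move=> k; apply: cesaro_mean_mass_le1 => i; exact: Ymeas.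
- by rewrite nu0_mass.
Qed.

End NegToCesaro.

Unset Implicit Arguments. Set Strict Implicit. Set Printing Implicit Defensive.

Theorem theoremB1 (R : realType) (X : topologicalType)
  (hX : hausdorff_space X) (cX : compact [set: X]) (sX : @second_countable X)
  (Y : set (wstar R X))
  (Ymeas : forall mu, Y mu -> is_measure mu)
  (Ypos : forall mu, Y mu -> 0 < mass mu)
  (Yne : Y !=set0) (Ycpt : compact Y)
  (mu0 : (X -> R) -> R) (mu0meas : is_measure mu0) (mu0pos : 0 < mass mu0) :
  [<->
    (* (i) *)
    (forall f : X -> R, continuous f -> mu0 f < 0 ->
       exists2 mu, Y mu & mu f <= 0);
    (* (ii) *)
    (forall f : X -> R, continuous f -> mu0 f = 0 ->
       exists2 mu, Y mu & mu f <= 0);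
    (* (iii) *)
    (@closure (wstar R X) (conv_hull (pos_cone Y)) mu0);
    (* (iv) *)
    (exists2 u : nat -> (X -> R) -> R, (forall k, Y (u k)) &
       forall f : X -> R, continuous f ->
         (fun k : nat => (k%:R)^-1 * \sum_(i < k) (u i f / mass (u i)))
           @ \oo --> mu0 f / mass mu0)].
Proof.
have i_iv :=
  cesaro_approachable_of_neg_witnessed Ymeas Ypos mu0meas mu0pos hX cX sX Yne.
have iv_iii := closure_of_cesaro_approachable Ypos mu0pos.
have iii_ii := null_witnessed_of_closure Ymeas mu0meas mu0pos Ycpt.
have ii_i := neg_witnessed_of_null Ymeas Ypos mu0meas mu0pos.
by tfae => [/i_iv/iv_iii/iii_ii|/ii_i/i_iv/iv_iii|/iii_ii/ii_i/i_iv|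
             /iv_iii/iii_ii/ii_i].
Qed.
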